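(* Let $H$ be a forest, let $(A,B)$ be a bipartition of $H$ with $|A|=|B|$, and let $n$ be an integer with $0\le n\le |A|$. Then there is a stable set $X$ of $H$ with $|X|=|A|$ and $|X\cap A|=n$.
   Context: A bipartition $(A,B)$ of $H$ is a partition of $V(H)$ into two stable sets. *)

From mathcomp Require Import all_boot.
Set Implicit Arguments. Unset Strict Implicit. Unset Printing Implicit Defensive.

Definition simple_graph (T : finType) (e : rel T) : Prop :=
  symmetric e /\ irreflexive e.

Definition is_graph_cycle (T : finType) (e : rel T) (c : seq T) : Prop :=
  3 <= size c /\ ucycle e c.

Definition forest (T : finType) (e : rel T) : Prop :=
  simple_graph e /\ forall c : seq T, ~ is_graph_cycle e c.

Definition stable (T : finType) (e : rel T) (X : {set T}) : Prop :=
  forall x y, x \in X -> y \in X -> ~~ e x y.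

Definition bipartition (T : finType) (e : rel T) (A B : {set T}) : Prop :=
  [/\ A :&: B = set0, A :|: B = [set: T], stable e A & stable e B].

(* Induct on k = |A| = |B|.  The subforest induced on A ∪ B has a vertex v
   with at most one neighbour u in A ∪ B (the end of a maximal path); say
   v ∈ A.  Delete v from A, and from B delete u if u ∈ B (any vertex
   otherwise), split the smaller pair by induction and put v back on the
   A-side: v has no neighbour left in B.  The two sides XA ⊆ A, XB ⊆ B of
   sizes n and k - n then have no edge between them, so XA ∪ XB is stable. *)
From mathcomp Require Import all_boot zify.

Set Implicit Arguments.
Unset Strict Implicit.
Unset Printing Implicit Defensive.

Section Forest.
Variables (T : finType) (e : rel T).
Hypothesis e_sym : symmetric e.

Definition nonadjacent (X Y : {set T}) : Prop :=
  forall x y, x \in X -> y \in Y -> ~~ e x y.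

Lemma nonadjacentC (X Y : {set T}) : nonadjacent X Y -> nonadjacent Y X.
Proof. by move=> XY x y xY yX; rewrite e_sym; apply: XY. Qed.

Lemma stableS (X Y : {set T}) : X \subset Y -> stable e Y -> stable e X.
Proof. by move=> /subsetP sXY sY x y /sXY xY /sXY; apply: sY. Qed.

Lemma stableU (X Y : {set T}) :
  stable e X -> stable e Y -> nonadjacent X Y -> stable e (X :|: Y).
Proof.
move=> sX sY XY x y; rewrite !inE => /orP[xX|xY] /orP[yX|yY].
- exact: sX.
- exact: XY.
- exact: nonadjacentC XY x y xY yX.
- exact: sY.
Qed.

Lemma cycle_of_closing_edge x p w :
  path e x (rcons p w) -> e w x -> uniq (x :: rcons p w) -> 0 < size p ->
  is_graph_cycle e (x :: rcons p w).
Proof.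
move=> pxw ewx uniq_c p_gt0; split; first by rewrite /= size_rcons; lia.
by rewrite /ucycle uniq_c andbT /cycle rcons_path pxw last_rcons.
Qed.

(* A longest simple path starting in V cannot be extended at its start, so
   every neighbour in V of its first vertex already lies on it. *)
Lemma exists_maximal_path (V : {set T}) x q :
  x \in V -> path e x q -> uniq (x :: q) ->
  exists x' q', [/\ x' \in V, path e x' q', uniq (x' :: q') &
    forall w, w \in V -> e x' w -> w \in x' :: q'].
Proof.
have [m] := ubnP (#|T| - size q).
elim: m x q => // m IH x q lt_m xV pxq uniq_xq.
case: (pickP [pred w | (w \in V) && e x w && (w \notin x :: q)]) => [w | none].
  move=> /andP[/andP[wV exw] w_new]; apply: (IH w (x :: q) _ wV).
  - have : size (x :: q) <= #|T| by rewrite -(card_uniqP uniq_xq) max_card.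
    by move: lt_m => /=; lia.
  - by rewrite /= pxq e_sym exw.
  - by rewrite /= w_new.
exists x, q; split=> // w wV exw; apply/negPn/negP => w_new.
by have := none w; rewrite /= wV exw w_new.
Qed.

Hypothesis e_irr : irreflexive e.
Hypothesis e_acyclic : forall c : seq T, ~ is_graph_cycle e c.

Lemma exists_leaf (V : {set T}) x0 : x0 \in V ->
  exists2 v, v \in V & exists u, forall w, w \in V -> e v w -> w = u.
Proof.
move=> x0V; have [x [q [xV pxq uniq_xq x_max]]] :=
  @exists_maximal_path V x0 [::] x0V isT isT.
exists x => //; case: q pxq uniq_xq x_max => [|y r] pxq uniq_xq x_max.
  by exists x => w wV exw; have := x_max w wV exw; rewrite inE => /eqP.
exists y => w wV exw; have := x_max w wV exw.
rewrite !inE => /or3P[/eqP wx | /eqP // | wr].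
  by move: exw; rewrite wx e_irr.
case/splitPr: wr pxq uniq_xq => p1 p2.
rewrite -cat_rcons -cat_cons cat_path => /andP[pxw _].
rewrite -cat_cons cat_uniq => /andP[uniq_c _].
have ewx : e w x by rewrite e_sym.
by case: (e_acyclic (@cycle_of_closing_edge x (y :: p1) w pxw ewx uniq_c isT)).
Qed.

Lemma balanced_nonadjacent_split k (A B : {set T}) n :
  #|A| = k -> #|B| = k -> n <= k ->
  exists XA XB : {set T}, [/\ XA \subset A, XB \subset B,
    #|XA| = n, #|XB| = k - n & nonadjacent XA XB].
Proof.
elim: k A B n => [|k IH] A B n cA cB le_nk.
  exists set0, set0; split; rewrite ?sub0set ?cards0 //; first lia.
  by move=> x y; rewrite inE.
have [v vAB [u v_leaf]] : exists2 v, v \in A :|: B &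
    exists u, forall w, w \in A :|: B -> e v w -> w = u.
  have /card_gt0P[a aA] : 0 < #|A| by rewrite cA.
  by apply: (exists_leaf (x0 := a)); rewrite inE aA.
wlog vA : A B n cA cB le_nk vAB v_leaf / v \in A.
  move=> sym; case/setUP: (vAB) => [vA | vB]; first exact: sym.
  rewrite setUC in vAB v_leaf.
  have [XB [XA [sB sA cXB cXA BA]]] := sym B A (k.+1 - n) cB cA
    (leq_subr _ _) vAB v_leaf vB.
  by exists XA, XB; split=> //; [lia | apply: nonadjacentC].
case: n le_nk => [|n] le_nk.
  exists set0, B; split; rewrite ?sub0set ?cards0 ?subn0 //.
  by move=> x y; rewrite inE.
have [b bB b_u] : exists2 b, b \in B & u \in B -> b = u.
  case uB: (u \in B); first by exists u.
  have /card_gt0P[b bB] : 0 < #|B| by rewrite cB.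
  by exists b.
have cA' : #|A :\ v| = k by move: cA; rewrite (cardsD1 v) vA; lia.
have cB' : #|B :\ b| = k by move: cB; rewrite (cardsD1 b) bB; lia.
have [XA [XB [sA sB cXA cXB XAB]]] := IH (A :\ v) (B :\ b) n cA' cB' le_nk.
exists (v |: XA), XB; split.
- by rewrite subUset sub1set vA (subset_trans sA) ?subD1set.
- by rewrite (subset_trans sB) ?subD1set.
- have vXA : v \notin XA by apply/negP => /(subsetP sA); rewrite !inE eqxx.
  by rewrite cardsU1 vXA cXA.
- by rewrite cXB.
move=> x y /setU1P[-> | xXA] yXB; last exact: XAB.
have /setD1P[yb yB] := subsetP sB y yXB.
apply/negP => evy; have yu : y = u by apply: v_leaf evy; rewrite inE yB orbT.
have uB : u \in B by rewrite -yu.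
by move: yb; rewrite (b_u uB) yu eqxx.
Qed.
End Forest.

Theorem mainTheorem6 (T : finType) (e : rel T) (A B : {set T}) (n : nat) :
  forest e -> bipartition e A B -> #|A| = #|B| -> n <= #|A| ->
  exists X : {set T}, stable e X /\ #|X| = #|A| /\ #|X :&: A| = n.
Proof.
move=> [[e_sym e_irr] e_acyclic] [AB0 _ sA sB] cAB le_nA.
have [XA [XB [sXA sXB cXA cXB XAB]]] :=
  balanced_nonadjacent_split e_sym e_irr e_acyclic
    (erefl #|A|) (esym cAB) le_nA.
have dXBA : [disjoint XB & A].
  by apply: disjointWl sXB _; rewrite -setI_eq0 setIC AB0.
exists (XA :|: XB); split; last split.
- exact: stableU (stableS sXA sA) (stableS sXB sB) XAB.
- rewrite cardsU setIC (disjoint_setI0 (disjointWr sXA dXBA)) cards0 cXA cXB.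
  lia.
- by rewrite setIUl (setIidPl sXA) (disjoint_setI0 dXBA) setU0.
Qed.
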